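(* Let $n\geq 3$, $m=2^{n-1}$, and let $G_2(n)$ be the gyrogroup of order $2^n$ defined in the context. A subset $H$ of $G_2(n)$ is a subgyrogroup of $G_2(n)$ if and only if it has one of the following forms: (1) $H=\langle 2^s\rangle$, a subgroup of $P(n)$, with $0\leq s\leq n-1$; (2) $H=\langle 2^s, m\rangle$ with $0\leq s\leq n-1$; all such $H$ are subgroups of $G_2(n)$ (i.e. subgyrogroups on which the operation is associative, all gyroautomorphisms restricting to the identity) except $H=\langle 1,m\rangle=G_2(n)$; (3) $H=\langle m+2^s\rangle$ with $0\leq s\leq n-2$, which is a subgroup of $G_2(n)$.
   Context: Setup: $n\ge 3$, $m=2^{n-1}$, $G_2(n)=\{0,1,\dots,2^n-1\}$, $P(n)=\{0,\dots,m-1\}$, $H(n)=\{m,\dots,2^n-1\}$; $O_P,E_P$ are the odd/even elements of $P(n)$, $O_H,E_H$ the odd/even elements of $H(n)$. For $i,j\in G_2(n)$ let $t,s\in P(n)$ with $t\equiv i+j\pmod m$, $s\equiv i+j+\frac m2\pmod m$, and set $i\oplus j=t$ if $(i,j)\in (P(n)\times P(n))\cup\big[(H(n)\times H(n))\setminus(E_H\times O_H)\big]$; $i\oplus j=t+m$ if $(i,j)\in (P(n)\times H(n))\cup\big[(H(n)\times P(n))\setminus(E_H\times O_P)\big]$; $i\oplus j=s$ if $(i,j)\in E_H\times O_H$; $i\oplus j=s+m$ if $(i,j)\in E_H\times O_P$. Let $A\colon G_2(n)\to G_2(n)$ be $A(i)=r$ if $i\in O_P$, $A(i)=r+m$ if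 $i\in O_H$, $A(i)=i$ otherwise, where $r\in P(n)$, $r\equiv i+\frac m2\pmod m$. Let $M=[O_P\times(O_H\cup E_H)]\cup[O_H\times(O_P\cup E_H)]\cup[E_H\times(O_P\cup O_H)]$, and $\mathrm{gyr}[a,b]=A$ if $(a,b)\in M$, $\mathrm{gyr}[a,b]=I$ (identity) otherwise. Then $(G_2(n),\oplus)$ is a gyrogroup with identity $0$ and gyroautomorphisms $\mathrm{gyr}[a,b]$; the restriction of $\oplus$ to $P(n)$ is addition modulo $m$, so $P(n)\cong\mathbb{Z}_m$. A subgyrogroup of a gyrogroup $G$ is a nonempty subset $H$ which is a gyrogroup under the restriction of $\oplus$ and such that for all $a,b\in H$ the restriction of $\mathrm{gyr}[a,b]$ to $H$ is an automorphism of $H$. For a subset $X$, $\langle X\rangle$ denotes the subgyrogroup generated by $X$ (the smallest subgyrogroup containing $X$); in (1), $\langle 2^s\rangle$ is the cyclic subgroup of $P(n)\cong\mathbb{Z}_m$ generated by $2^s$ modulo $m$. *)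

(* G_2(n) is modelled as the natural numbers
   0 .. 2^n - 1; subsets of G_2(n) are predicates nat -> Prop contained in
   [x < 2^n]. *)
From mathcomp Require Import all_boot.
Set Implicit Arguments. Unset Strict Implicit. Unset Printing Implicit Defensive.

Definition mG (n : nat) : nat := 2 ^ n.-1.

Definition inP n (i : nat) : bool := i < mG n.
Definition inH n (i : nat) : bool := mG n <= i.
Definition OP n i : bool := inP n i && odd i.
Definition EP n i : bool := inP n i && ~~ odd i.
Definition OH n i : bool := inH n i && odd i.
Definition EH n i : bool := inH n i && ~~ odd i.

Definition oplus (n : nat) (i j : nat) : nat :=
  let m := mG n in
  let t := (i + j) %% m in
  let s := (i + j + m %/ 2) %% m in
  if EH n i && OH n j then s
  else if EH n i && OP n j then s + m
  else if (inP n i && inP n j) || (inH n i && inH n j) then t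
  else t + m.

Definition Amap (n : nat) (i : nat) : nat :=
  let m := mG n in
  let r := (i + m %/ 2) %% m in
  if OP n i then r else if OH n i then r + m else i.

Definition inM n (a b : nat) : bool :=
  [|| OP n a && (OH n b || EH n b),
      OH n a && (OP n b || EH n b)
    | EH n a && (OP n b || OH n b)].

Definition gyr (n : nat) (a b : nat) : nat -> nat :=
  if inM n a b then Amap n else id.

Definition is_gyrogroup_on (S : nat -> Prop) (op : nat -> nat -> nat)
  (g : nat -> nat -> nat -> nat) : Prop :=
  (forall a b, S a -> S b -> S (op a b)) /\
  (exists e, S e /\ (forall a, S a -> op e a = a) /\
             (forall a, S a -> exists b, S b /\ op b a = e)) /\
  (forall a b, S a -> S b ->
     (forall x, S x -> S (g a b x)) /\
     (forall x y, S x -> S y -> g a b x = g a b y -> x = y) /\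
     (forall y, S y -> exists x, S x /\ g a b x = y) /\
     (forall x y, S x -> S y -> g a b (op x y) = op (g a b x) (g a b y))) /\
  (forall a b c, S a -> S b -> S c ->
     op a (op b c) = op (op a b) (g a b c)) /\
  (forall a b c, S a -> S b -> S c -> g a b c = g (op a b) b c).

Definition subG (n : nat) (H : nat -> Prop) : Prop := forall x, H x -> x < 2 ^ n.

Definition is_subgyrogroup (n : nat) (H : nat -> Prop) : Prop :=
  subG n H /\ is_gyrogroup_on H (oplus n) (gyr n).

Definition is_subgroup (n : nat) (H : nat -> Prop) : Prop :=
  is_subgyrogroup n H /\
  (forall a b c, H a -> H b -> H c ->
     oplus n a (oplus n b c) = oplus n (oplus n a b) c) /\
  (forall a b c, H a -> H b -> H c -> gyr n a b c = c).

Definition gen (n : nat) (X : nat -> Prop) : nat -> Prop :=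
  fun x => forall K, is_subgyrogroup n K -> (forall y, X y -> K y) -> K x.

Definition cycP (n s : nat) : nat -> Prop :=
  fun x => exists k, x = (k * 2 ^ s) %% mG n.

Definition same_set (A B : nat -> Prop) : Prop := forall x, A x <-> B x.

From mathcomp Require Import all_boot boolp.
From mathcomp Require Import zify.
Set Implicit Arguments. Unset Strict Implicit. Unset Printing Implicit Defensive.

(* Write x < 2m as h*m + r with h = [m <= x] and r = x mod m.  In these
   coordinates a (+) b = (h_a xor h_b, a + b + [a in E_H and b odd]*(m/2))
   and A x = (h_x, x + [x odd]*(m/2)), residues taken mod m, so every
   gyrogroup law reduces to a parity computation modulo m = 2*(m/2).
   The elements of a subgyrogroup K lying in P(n) form a subgroup of Z_m,
   hence are the multiples of some 2^s.  If K contains some y in H(n), with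
   residue q, then translating by y shows that the elements of K in H(n) are
   the m + p with p = q mod 2^s; as y (+) y lies in P(n), 2q = 0 mod 2^s, so
   q = 0 or q = 2^(s-1) mod 2^s: K is <2^s, m> or <m + 2^(s-1)>. *)

Lemma dvdn_modr d m x : d %| m -> (d %| x %% m) = (d %| x).
Proof. by move=> dm; rewrite /dvdn (modn_dvdm _ dm). Qed.

Lemma dvdn_modDl d m x y : d %| m -> (d %| x %% m + y) = (d %| x + y).
Proof. by move=> dm; rewrite -(dvdn_modr _ dm) modnDml dvdn_modr. Qed.

Lemma modnD2 d x x' y y' z : x = x' %[mod d] -> y = y' %[mod d] ->
  x + y + z = x' + y' + z %[mod d].
Proof.
by move=> ex ey; rewrite -(modnDml (x + y)) -(modnDm x y) ex ey modnDm modnDml.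
Qed.

Lemma modn_addMhalf d h x a b : d = h * 2 -> odd a = odd b ->
  x + a * h = x + b * h %[mod d].
Proof.
move=> -> eab; rewrite -(odd_double_half a) -(odd_double_half b) eab.
rewrite !mulnDl -!muln2 -!mulnA [2 * h]mulnC !addnA.
by rewrite !(addnC _ (_ * (h * 2))) !modnMDl.
Qed.

(* Iterating the least positive element d of S gives m - d; then
   x mod d = x + (x/d)*(m - d) mod m lies in S, so d divides every x in S. *)
Lemma addmod_closed_dvdn m (S : nat -> Prop) : 0 < m -> S 0 ->
    (forall x y, x < m -> y < m -> S x -> S y -> S ((x + y) %% m)) ->
  exists2 d, d %| m & forall x, x < m -> S x <-> d %| x.
Proof.
move=> m_gt0 S0 SD.
have S_mul g : g < m -> S g -> forall x, x < m -> S x ->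
    forall j, S ((x + j * g) %% m).
  move=> gm Sg x xm Sx; elim=> [|j IHj]; first by rewrite addn0 modn_small.
  have := SD _ _ (ltn_pmod _ m_gt0) gm IHj Sg.
  by rewrite modnDml mulSn [g + _]addnC addnA.
have [[x0 [Sx0 /andP [x0_gt0 x0m]]]|noS] :=
    asboolP (exists x, S x /\ 0 < x < m); last first.
  exists m => // x xm; split=> [Sx|mx].
    by case: (posnP x) => [->|x_gt0] //; case: noS; exists x; rewrite x_gt0.
  by case: (posnP x) => [->|x_gt0] //; have := dvdn_leq x_gt0 mx; lia.
pose P x := (0 < x < m) && `[< S x >].
have [|d /andP [/andP [d_gt0 dm] /asboolP Sd] d_min] :=
    ex_minnP (ex_intro P x0 _).
  by rewrite /P x0_gt0 x0m; apply/asboolP.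
have S_md : S (m - d).
  have := S_mul d dm Sd 0 m_gt0 S0 m.-1.
  have -> : 0 + m.-1 * d = d.-1 * m + (m - d) by nia.
  by rewrite modnMDl modn_small //; lia.
have dvd_S x : x < m -> S x -> d %| x.
  move=> xm Sx; have := S_mul (m - d) ltac:(lia) S_md x xm Sx (x %/ d).
  have -> : (x + x %/ d * (m - d)) %% m = x %% d.
    have xd_le : x %/ d * d <= x %/ d * m by rewrite leq_mul2l ltnW // orbT.
    have -> : x + x %/ d * (m - d) = x %/ d * m + x %% d.
      by rewrite {1}(divn_eq x d) mulnBr; lia.
    by rewrite modnMDl modn_small // (ltn_trans (ltn_pmod _ d_gt0)).
  move=> Sr; apply/eqP; case: (posnP (x %% d)) => // r_gt0.
  have /d_min : P (x %% d).
    by rewrite /P r_gt0 (ltn_trans (ltn_pmod _ d_gt0)) //; apply/asboolP.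
  by rewrite leqNgt ltn_pmod.
exists d.
  by rewrite -(subnK (ltnW dm)) dvdn_addl // dvd_S // ltn_subrL d_gt0.
move=> x xm; split; first exact: dvd_S.
move=> dx; have := S_mul d dm Sd 0 m_gt0 S0 (x %/ d).
by rewrite add0n divnK // modn_small.
Qed.

Lemma same_set_eq (A B : nat -> Prop) : same_set A B -> A = B.
Proof. by move=> AB; apply: funext => x; apply: propext. Qed.

Lemma gen_eq n (X S : nat -> Prop) :
    is_subgyrogroup n S -> (forall y, X y -> S y) ->
    (forall K, is_subgyrogroup n K -> (forall y, X y -> K y) ->
      forall x, S x -> K x) ->
  gen n X = S.
Proof.
move=> S_sg XS S_min; apply: same_set_eq => x.
by split=> [/(_ S S_sg XS) | Sx K K_sg /S_min-/(_ K_sg x Sx)].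
Qed.

Definition twist n i j : bool := EH n i && odd j.

Definition ginv n x := inH n x * mG n + (mG n - x %% mG n) %% mG n.

Definition opow n g j := iter j (fun z => oplus n z g) 0.

Definition multP n s x : bool := (x < mG n) && (2 ^ s %| x).
Definition multG n s x : bool := (x < mG n * 2) && (2 ^ s %| x %% mG n).
Definition shiftG n s x : bool :=
  (x < mG n * 2) && (2 ^ s.+1 %| x %% mG n + inH n x * 2 ^ s).

Section G2.
Variable n : nat.
Hypothesis n_gt2 : 2 < n.
Local Notation m := (mG n).
Local Notation k := (mG n %/ 2).

Lemma mG_gt0 : 0 < m.
Proof. by rewrite expn_gt0. Qed.

Lemma mGE : m = 2 ^ (n - 1).
Proof. by rewrite /mG subn1. Qed.

Lemma halfmE : k = 2 ^ (n - 2).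
Proof. by rewrite mGE (_ : n - 1 = (n - 2).+1) ?expnS ?mulKn //; lia. Qed.

Lemma mG_double : m = k * 2.
Proof. by rewrite halfmE mGE -expnSr; congr (_ ^ _); lia. Qed.

Lemma odd_halfm : odd k = false.
Proof.
by rewrite halfmE oddX; apply/negbTE; rewrite negb_or /=; apply/eqP; lia.
Qed.

Lemma odd_mG : odd m = false.
Proof. by rewrite mG_double oddM andbF. Qed.

Lemma expn_mG : 2 ^ n = m * 2.
Proof. by rewrite mGE -expnSr; congr (_ ^ _); lia. Qed.

Lemma dvdn_mG s : s <= n - 1 -> 2 ^ s %| m.
Proof. by move=> s_le; rewrite mGE dvdn_exp2l. Qed.

Lemma ltn_mG s : s <= n - 2 -> 2 ^ s < m.
Proof. by move=> s_le; rewrite mGE ltn_exp2l //; lia. Qed.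

Lemma ltn_modm x : x %% m < m.
Proof. by rewrite ltn_pmod // mG_gt0. Qed.

Lemma inH_small x : x < m -> inH n x = false.
Proof. by move=> xm; rewrite /inH leqNgt xm. Qed.

Lemma odd_modm x : odd (x %% m) = odd x.
Proof. by rewrite odd_mod // odd_mG. Qed.

Lemma G2_decomp x : x < m * 2 -> x = inH n x * m + x %% m.
Proof.
rewrite /inH; case: (leqP m x) => [mx x_lt|xm _]; last by rewrite modn_small.
by rewrite mul1n -{2}(subnK mx) modnDr modn_small; lia.
Qed.

Lemma G2_eq x y : x < m * 2 -> y < m * 2 ->
  inH n x = inH n y -> x %% m = y %% m -> x = y.
Proof. by move=> xm ym eH er; rewrite (G2_decomp xm) (G2_decomp ym) eH er. Qed.

Section Coordinates.
Variables (h : bool) (r : nat).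
Hypothesis rm : r < m.

Lemma ltn_coord : h * m + r < m * 2.
Proof. by case: h => /=; lia. Qed.

Lemma inH_coord : inH n (h * m + r) = h.
Proof. by rewrite /inH; case: h => /=; lia. Qed.

Lemma modn_coord : (h * m + r) %% m = r.
Proof. by rewrite modnMDl modn_small. Qed.

Lemma odd_coord : odd (h * m + r) = odd r.
Proof. by rewrite oddD oddM odd_mG andbF. Qed.

End Coordinates.

Lemma oplusE i j :
  oplus n i j = (inH n i (+) inH n j) * m + (i + j + twist n i j * k) %% m.
Proof.
rewrite /oplus /twist /EH /OH /OP /inP /inH !ltnNge.
by case: (m <= i); case: (m <= j); case: (odd i); case: (odd j) => /=;
  rewrite ?mul1n ?mul0n ?add0n ?addn0 // addnC.
Qed.

Lemma AmapE x : x < m * 2 ->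
  Amap n x = inH n x * m + (x + odd x * k) %% m.
Proof.
move=> x_lt; move: (G2_decomp x_lt).
rewrite /Amap /OH /OP /inP /inH !ltnNge.
case: (m <= x); case: (odd x) => /= x_dec;
  by rewrite ?mul1n ?mul0n ?add0n ?addn0 // in x_dec *; rewrite addnC.
Qed.

Lemma oplus_lt i j : oplus n i j < m * 2.
Proof. by rewrite oplusE ltn_coord ?ltn_modm. Qed.

Lemma inH_oplus i j : inH n (oplus n i j) = inH n i (+) inH n j.
Proof. by rewrite oplusE inH_coord ?ltn_modm. Qed.

Lemma modn_oplus i j : oplus n i j %% m = (i + j + twist n i j * k) %% m.
Proof. by rewrite oplusE modn_coord ?ltn_modm. Qed.

Lemma odd_oplus i j : odd (oplus n i j) = odd i (+) odd j.
Proof.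
by rewrite oplusE odd_coord odd_modm // !oddD oddM odd_halfm andbF addbF.
Qed.

Lemma oplus_small a b : a < m -> b < m -> oplus n a b = (a + b) %% m.
Proof.
by move=> am bm; rewrite oplusE /twist /EH !inH_small //= !mul0n add0n addn0.
Qed.

Lemma oplus_small_mG a : a < m -> oplus n a m = m + a.
Proof.
move=> am; rewrite oplusE /twist /EH inH_small // /inH leqnn /= mul1n addn0.
by rewrite modnDr modn_small.
Qed.

Lemma Amap_lt x : x < m * 2 -> Amap n x < m * 2.
Proof. by move=> x_lt; rewrite AmapE // ltn_coord ?ltn_modm. Qed.

Lemma inH_Amap x : x < m * 2 -> inH n (Amap n x) = inH n x.
Proof. by move=> x_lt; rewrite AmapE // inH_coord ?ltn_modm. Qed.

Lemma modn_Amap x : x < m * 2 -> Amap n x %% m = (x + odd x * k) %% m.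
Proof. by move=> x_lt; rewrite AmapE // modn_coord ?ltn_modm. Qed.

Lemma odd_Amap x : x < m * 2 -> odd (Amap n x) = odd x.
Proof.
move=> x_lt; rewrite AmapE // odd_coord odd_modm //.
by rewrite !oddD oddM odd_halfm andbF addbF.
Qed.

Lemma Amap_oplus x y : x < m * 2 -> y < m * 2 ->
  Amap n (oplus n x y) = oplus n (Amap n x) (Amap n y).
Proof.
move=> x_lt y_lt; apply: G2_eq; rewrite ?Amap_lt ?oplus_lt //.
  by rewrite inH_Amap ?oplus_lt // !inH_oplus !inH_Amap.
rewrite modn_Amap ?oplus_lt // modn_oplus.
rewrite (modnD2 _ (modn_Amap x_lt) (modn_Amap y_lt)).
rewrite -(modnDml (oplus n x y)) modn_oplus modnDml.
rewrite (_ : x + y + _ + _ = x + y + (twist n x y + odd (oplus n x y)) * k);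
  last lia.
rewrite (_ : x + _ + (y + _) + _ =
  x + y + (odd x + odd y + twist n (Amap n x) (Amap n y)) * k); last lia.
apply: modn_addMhalf; first exact: mG_double.
rewrite /twist /EH !inH_Amap // !odd_Amap // odd_oplus.
by case: (inH n x); case: (odd x); case: (odd y).
Qed.

Lemma AmapK x : x < m * 2 -> Amap n (Amap n x) = x.
Proof.
move=> x_lt; have Ax_lt := Amap_lt x_lt.
apply: G2_eq; rewrite ?Amap_lt ?inH_Amap //.
rewrite modn_Amap // odd_Amap // -(modnDml (Amap n x)) modn_Amap // modnDml.
rewrite -addnA -mulnDl -[in RHS](addn0 x) -(mul0n k).
by apply: modn_addMhalf; [exact: mG_double | case: (odd x)].
Qed.

Lemma inME a b : inM n a b =
  [|| ~~ inH n a && odd a && inH n b,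
      inH n a && odd a && (~~ inH n b && odd b || inH n b && ~~ odd b)
    | inH n a && ~~ odd a && odd b].
Proof.
rewrite /inM /OP /OH /EH /inP /inH !ltnNge.
by case: (m <= a); case: (m <= b); case: (odd a); case: (odd b).
Qed.

Lemma gyr_lt a b x : x < m * 2 -> gyr n a b x < m * 2.
Proof. by move=> x_lt; rewrite /gyr; case: inM => //; apply: Amap_lt. Qed.

Lemma inH_gyr a b x : x < m * 2 -> inH n (gyr n a b x) = inH n x.
Proof. by move=> x_lt; rewrite /gyr; case: inM => //; apply: inH_Amap. Qed.

Lemma odd_gyr a b x : x < m * 2 -> odd (gyr n a b x) = odd x.
Proof. by move=> x_lt; rewrite /gyr; case: inM => //; apply: odd_Amap. Qed.

Lemma modn_gyr a b x : x < m * 2 ->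
  gyr n a b x %% m = (x + (inM n a b && odd x) * k) %% m.
Proof. by move=> x_lt; rewrite /gyr; case: inM; rewrite ?modn_Amap ?addn0. Qed.

Lemma gyr_even a b x : ~~ odd x -> gyr n a b x = x.
Proof.
move=> /negbTE x_even; rewrite /gyr; case: inM => //=.
by rewrite /Amap /OP /OH x_even !andbF.
Qed.

Lemma gyrK a b x : x < m * 2 -> gyr n a b (gyr n a b x) = x.
Proof. by move=> x_lt; rewrite /gyr; case: inM => //; apply: AmapK. Qed.

Lemma gyr_oplus a b x y : x < m * 2 -> y < m * 2 ->
  gyr n a b (oplus n x y) = oplus n (gyr n a b x) (gyr n a b y).
Proof. by move=> x_lt y_lt; rewrite /gyr; case: inM => //; apply: Amap_oplus. Qed.

Lemma oplus_gyroassoc a b c : a < m * 2 -> b < m * 2 -> c < m * 2 ->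
  oplus n a (oplus n b c) = oplus n (oplus n a b) (gyr n a b c).
Proof.
move=> a_lt b_lt c_lt; apply: G2_eq; rewrite ?oplus_lt //.
  by rewrite !inH_oplus inH_gyr // addbA.
have -> : oplus n a (oplus n b c) %% m =
    (a + b + c + (twist n b c + twist n a (oplus n b c)) * k) %% m.
  rewrite modn_oplus (modnD2 _ (erefl (a %% m)) (modn_oplus b c)).
  by congr (_ %% _); lia.
have -> : oplus n (oplus n a b) (gyr n a b c) %% m =
    (a + b + c + (twist n a b + (inM n a b && odd c) +
                  twist n (oplus n a b) (gyr n a b c)) * k) %% m.
  rewrite modn_oplus (modnD2 _ (modn_oplus a b) (modn_gyr _ _ c_lt)).
  by congr (_ %% _); lia.
apply: modn_addMhalf; first exact: mG_double.
rewrite /twist /EH !inH_oplus !odd_oplus odd_gyr // inME.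
by case: (inH n a); case: (inH n b); case: (inH n c);
  case: (odd a); case: (odd b); case: (odd c).
Qed.

Lemma gyr_loop a b : gyr n a b = gyr n (oplus n a b) b.
Proof.
rewrite /gyr; congr (if _ then _ else _).
rewrite !inME inH_oplus odd_oplus.
by case: (inH n a); case: (inH n b); case: (odd a); case: (odd b).
Qed.

Lemma inv_lt x : ginv n x < m * 2.
Proof. by rewrite ltn_coord ?ltn_modm. Qed.

Lemma inH_inv x : inH n (ginv n x) = inH n x.
Proof. by rewrite inH_coord ?ltn_modm. Qed.

Lemma modn_inv x : ginv n x %% m = (m - x %% m) %% m.
Proof. by rewrite modn_coord ?ltn_modm. Qed.

Lemma oplus0 a : a < m * 2 -> oplus n 0 a = a.
Proof.
move=> a_lt; rewrite oplusE /twist /EH inH_small ?mG_gt0 //= add0n addn0.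
by rewrite -G2_decomp.
Qed.

Lemma oplus_invl x : x < m * 2 -> oplus n (ginv n x) x = 0.
Proof.
move=> x_lt; apply: G2_eq; rewrite ?oplus_lt ?muln_gt0 ?mG_gt0 //.
  by rewrite inH_oplus inH_inv addbb inH_small ?mG_gt0.
rewrite modn_oplus.
have xm := ltn_modm x.
have -> : twist n (ginv n x) x = false.
  rewrite /twist /EH -(odd_modm x) -(odd_modm (ginv n x)) modn_inv.
  rewrite odd_modm oddB ?odd_mG //; last exact: ltnW.
  by case: (odd (x %% m)); rewrite !andbF.
rewrite mul0n addn0 mod0n -modnDm modn_inv modnDml.
by rewrite subnK ?modnn // ltnW.
Qed.

Lemma oplus_idem x : x < m * 2 -> oplus n x x = x -> x = 0.
Proof.
move=> x_lt xx.
have xH : inH n x = false by rewrite -xx inH_oplus addbb.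
have : x %% m = (x + x + twist n x x * k) %% m by rewrite -modn_oplus xx.
rewrite /twist /EH xH mul0n addn0 => /eqP.
rewrite -{1}(addn0 x) eqn_modDl eq_sym mod0n modn_small => [/eqP //|].
by move: xH; rewrite /inH; lia.
Qed.

Lemma subgyrogroup_of (S : nat -> Prop) :
    (forall x, S x -> x < m * 2) -> S 0 ->
    (forall a b, S a -> S b -> S (oplus n a b)) ->
    (forall a, S a -> S (ginv n a)) ->
    (forall a b x, S a -> S b -> S x -> S (gyr n a b x)) ->
  is_subgyrogroup n S.
Proof.
move=> S_lt S0 SD SV Sgyr; split; first by move=> x /S_lt; rewrite expn_mG.
split; first exact: SD.
split.
  exists 0; do !split=> //; first by move=> a /S_lt /oplus0.
  by move=> a Sa; exists (ginv n a); split; [apply: SV | apply/oplus_invl/S_lt].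
split.
  move=> a b Sa Sb; split; first by move=> x; apply: Sgyr.
  split.
    by move=> x y Sx Sy exy; rewrite -(gyrK a b (S_lt x Sx)) exy gyrK ?S_lt.
  split.
    by move=> y Sy; exists (gyr n a b y); split; [apply: Sgyr | apply/gyrK/S_lt].
  by move=> x y /S_lt x_lt /S_lt y_lt; apply: gyr_oplus.
split.
  by move=> a b c /S_lt a_lt /S_lt b_lt /S_lt c_lt; apply: oplus_gyroassoc.
by move=> a b c _ _ _; rewrite gyr_loop.
Qed.

Lemma subgyrogroup_closed (K : nat -> Prop) : is_subgyrogroup n K ->
  [/\ forall x, K x -> x < m * 2, K 0 &
      forall a b, K a -> K b -> K (oplus n a b)].
Proof.
move=> [K_lt [KD [[e [Ke [e_id _]]] _]]].
have {}K_lt x : K x -> x < m * 2 by move=> /K_lt; rewrite expn_mG.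
by split=> //; rewrite -(oplus_idem (K_lt e Ke) (e_id e Ke)).
Qed.

Lemma subgroup_of (S : nat -> Prop) : is_subgyrogroup n S ->
  (forall a b c, S a -> S b -> S c -> gyr n a b c = c) -> is_subgroup n S.
Proof.
move=> S_sg S_gyr; have [S_lt _ _] := subgyrogroup_closed S_sg.
do !split=> //; move=> a b c Sa Sb Sc.
by rewrite oplus_gyroassoc ?S_lt // S_gyr.
Qed.

Lemma gyr_1_mG : gyr n 1 m 1 = k.+1.
Proof.
have k_ge2 : 2 <= k by rewrite halfmE (leq_exp2l 1); lia.
have m1 : 1 < m by rewrite mG_double; lia.
rewrite /gyr inME // inH_small // /inH leqnn /= AmapE; last lia.
by rewrite inH_small //= mul0n add0n mul1n modn_small // mG_double; lia.
Qed.

Lemma odd_dvdn_modm s x : 0 < s -> 2 ^ s %| x %% m -> odd x = false.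
Proof.
move=> s_gt0 dx; rewrite -odd_modm; apply/negbTE; rewrite -dvdn2.
by apply: dvdn_trans dx; rewrite -{1}(expn1 2) dvdn_exp2l.
Qed.

Section Multiples.
Variable s : nat.

Lemma multG0 : multG n s 0.
Proof. by rewrite /multG mod0n dvdn0 muln_gt0 mG_gt0. Qed.

Lemma multG_gyr a b x : multG n s x -> multG n s (gyr n a b x).
Proof.
move=> /andP [x_lt dx]; rewrite /multG gyr_lt //=.
case: (posnP s) => [->|s_gt0]; first by rewrite dvd1n.
by rewrite gyr_even // (odd_dvdn_modm s_gt0 dx).
Qed.

Lemma multPE x : multP n s x = multG n s x && ~~ inH n x.
Proof.
rewrite /multP /multG /inH -ltnNge; case: ltnP => xm; last by rewrite andbF.
by rewrite modn_small // andbT (_ : x < m * 2) //; lia.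
Qed.

Hypothesis s_le : s <= n - 1.

Lemma multG_oplus a b : multG n s a -> multG n s b -> multG n s (oplus n a b).
Proof.
move=> /andP [a_lt da] /andP [b_lt db]; rewrite /multG oplus_lt //=.
case: (posnP s) => [->|s_gt0]; first by rewrite dvd1n.
rewrite modn_oplus /twist (odd_dvdn_modm s_gt0 db) andbF mul0n addn0.
by rewrite dvdn_modr ?dvdn_mG // dvdn_add // -(dvdn_modr _ (dvdn_mG s_le)).
Qed.

Lemma multG_inv a : multG n s a -> multG n s (ginv n a).
Proof.
move=> /andP [_ da]; rewrite /multG inv_lt modn_inv dvdn_modr ?dvdn_mG //=.
by rewrite dvdn_sub ?dvdn_mG.
Qed.

Lemma multG_subgyrogroup : is_subgyrogroup n (multG n s).
Proof.
apply: subgyrogroup_of.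
- by move=> x /andP [].
- exact: multG0.
- exact: multG_oplus.
- exact: multG_inv.
- by move=> a b x _ _; apply: multG_gyr.
Qed.

Lemma multP_subgyrogroup : is_subgyrogroup n (multP n s).
Proof.
apply: subgyrogroup_of.
- by move=> x; rewrite multPE => /andP [/andP []].
- by rewrite multPE multG0 inH_small ?mG_gt0.
- move=> a b; rewrite !multPE inH_oplus.
  by move=> /andP [Ga /negbTE ->] /andP [Gb /negbTE ->]; rewrite multG_oplus.
- by move=> a; rewrite !multPE inH_inv => /andP [Ga ->]; rewrite multG_inv.
- move=> a b x _ _; rewrite !multPE => /andP [Gx xP].
  by rewrite inH_gyr ?multG_gyr //; case/andP: Gx.
Qed.

End Multiples.

Section Shifted.
Variable s : nat.

Lemma odd_shiftG x : shiftG n s x -> odd x = (s == 0) && inH n x.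
Proof.
move=> /andP [_ dx].
have : 2 %| x %% m + inH n x * 2 ^ s.
  by apply: dvdn_trans dx; rewrite -{1}(expn1 2) dvdn_exp2l.
rewrite dvdn2 oddD oddM oddX odd_modm /= orbF.
by case: (odd x); case: (inH n x); case: (s == 0).
Qed.

Lemma twist_shiftG a b : shiftG n s a -> shiftG n s b -> twist n a b = false.
Proof.
move=> Sa Sb; rewrite /twist /EH (odd_shiftG Sa) (odd_shiftG Sb).
by case: (inH n a); case: (inH n b); case: (s == 0).
Qed.

Lemma shiftG0 : shiftG n s 0.
Proof.
by rewrite /shiftG mod0n inH_small ?mG_gt0 // muln_gt0 mG_gt0 /= dvdn0.
Qed.

Hypothesis s_le : s <= n - 2.

Lemma dvdn_mG_shift : 2 ^ s.+1 %| m.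
Proof. by apply: dvdn_mG; lia. Qed.

Lemma shiftG_oplus a b : shiftG n s a -> shiftG n s b -> shiftG n s (oplus n a b).
Proof.
move=> Sa Sb; have twist0 := twist_shiftG Sa Sb.
move: Sa Sb => /andP [a_lt da] /andP [b_lt db].
rewrite /shiftG oplus_lt modn_oplus twist0 mul0n addn0 inH_oplus.
rewrite !dvdn_modDl ?dvdn_mG_shift // in da db *.
have := dvdn_add da db.
rewrite (_ : a + _ + (b + _) = a + b + (inH n a (+) inH n b) * 2 ^ s +
                               (inH n a && inH n b) * 2 ^ s.+1); last first.
  by rewrite expnS; case: (inH n a); case: (inH n b) => /=; lia.
by rewrite dvdn_addl // dvdn_mull.
Qed.

Lemma shiftG_inv a : shiftG n s a -> shiftG n s (ginv n a).
Proof.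
move=> /andP [_ da]; have am := ltn_modm a.
rewrite /shiftG inv_lt inH_inv modn_inv dvdn_modDl ?dvdn_mG_shift //=.
rewrite (_ : m - a %% m + _ =
  m + inH n a * 2 ^ s.+1 - (a %% m + inH n a * 2 ^ s)).
  by rewrite dvdn_sub // dvdn_add ?dvdn_mull ?dvdn_mG_shift.
by rewrite expnS; case: (inH n a) => /=; lia.
Qed.

Lemma shiftG_gyr a b x : shiftG n s x -> shiftG n s (gyr n a b x).
Proof.
move=> Sx; have x_odd := odd_shiftG Sx; move: Sx => /andP [x_lt dx].
rewrite /shiftG gyr_lt // inH_gyr // modn_gyr // dvdn_modDl ?dvdn_mG_shift //=.
rewrite dvdn_modDl ?dvdn_mG_shift // in dx.
rewrite addnAC dvdn_addl //; case: (posnP s) => [s0|s_gt0].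
  by rewrite s0 dvdn_mull // dvdn2 odd_halfm.
by rewrite x_odd gtn_eqF //= andbF mul0n dvdn0.
Qed.

Lemma shiftG_subgyrogroup : is_subgyrogroup n (shiftG n s).
Proof.
apply: subgyrogroup_of.
- by move=> x /andP [].
- exact: shiftG0.
- exact: shiftG_oplus.
- exact: shiftG_inv.
- by move=> a b x _ _; apply: shiftG_gyr.
Qed.

End Shifted.

Lemma opow_in (K : nat -> Prop) g : is_subgyrogroup n K -> K g ->
  forall j, K (opow n g j).
Proof.
by move=> /subgyrogroup_closed [_ K0 KD] Kg; elim=> [|j IHj] //=; apply: KD.
Qed.

Lemma opow_small g j : g < m -> opow n g j = (j * g) %% m.
Proof.
move=> gm; elim: j => [|j IHj]; first by rewrite mod0n.
rewrite /opow iterS -/(opow n g j) IHj oplus_small ?ltn_modm //.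
by rewrite modnDml mulSn addnC.
Qed.

Lemma opow_shift s j : s <= n - 2 ->
  opow n (m + 2 ^ s) j = odd j * m + (j * 2 ^ s) %% m.
Proof.
move=> s_le; have sm := ltn_mG s_le.
elim: j => [|j IHj]; first by rewrite /= mod0n.
rewrite /opow iterS -/(opow n _ j) IHj; apply: G2_eq.
- exact: oplus_lt.
- exact/ltn_coord/ltn_modm.
- by rewrite inH_oplus !inH_coord ?ltn_modm // /inH leq_addr oddS addbT.
have twist0 : twist n (odd j * m + (j * 2 ^ s) %% m) (m + 2 ^ s) = false.
  rewrite /twist /EH inH_coord ?ltn_modm // odd_coord odd_modm.
  rewrite oddD oddM odd_mG /=.
  by case: (odd j); case: (odd (2 ^ s)).
rewrite modn_oplus twist0 modn_coord ?ltn_modm //.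
rewrite (modnD2 _ (modn_coord (odd j) (ltn_modm (j * 2 ^ s))) (modnDl (2 ^ s) m)).
by rewrite mul0n addn0 mulSn addnC.
Qed.

Lemma multP_min (K : nat -> Prop) s : is_subgyrogroup n K -> K (2 ^ s) ->
  forall x, multP n s x -> K x.
Proof.
move=> K_sg Ks x /andP [xm dx]; have [_ K0 _] := subgyrogroup_closed K_sg.
case: (posnP x) => [-> //|x_gt0].
have sm : 2 ^ s < m by apply: leq_ltn_trans (dvdn_leq x_gt0 dx) xm.
have := opow_in K_sg Ks (x %/ 2 ^ s).
by rewrite opow_small // divnK // modn_small.
Qed.

Lemma multG_min (K : nat -> Prop) s : is_subgyrogroup n K -> K (2 ^ s) -> K m ->
  forall x, multG n s x -> K x.
Proof.
move=> K_sg Ks Km x /andP [x_lt dx]; have [_ _ KD] := subgyrogroup_closed K_sg.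
have Kr : K (x %% m) by apply: multP_min K_sg Ks _ _; rewrite /multP ltn_modm.
rewrite (G2_decomp x_lt); case: (inH n x); last by rewrite mul0n add0n.
by rewrite mul1n -oplus_small_mG ?ltn_modm //; apply: KD.
Qed.

Lemma shiftG_min (K : nat -> Prop) s : s <= n - 2 -> is_subgyrogroup n K ->
  K (m + 2 ^ s) -> forall x, shiftG n s x -> K x.
Proof.
move=> s_le K_sg Ks x /andP [x_lt dx].
have dr : 2 ^ s %| x %% m.
  have : 2 ^ s %| x %% m + inH n x * 2 ^ s.
    by apply: dvdn_trans dx; apply: dvdn_exp2l.
  by rewrite dvdn_addl // dvdn_mull.
set j := x %% m %/ 2 ^ s.
have rE : x %% m = j * 2 ^ s by rewrite divnK.
have odd_j : odd j = inH n x.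
  move: dx; rewrite rE -mulnDl expnS dvdn_pmul2r ?expn_gt0 //.
  by rewrite dvdn2 oddD; case: (inH n x); case: (odd j).
have := opow_in K_sg Ks j.
by rewrite opow_shift // odd_j -rE modn_mod -G2_decomp.
Qed.

Lemma cycP_multP s : s <= n - 1 -> cycP n s = multP n s.
Proof.
move=> s_le; apply: same_set_eq => x; split=> [[j ->]|/andP [xm dx]].
  by rewrite /multP ltn_modm dvdn_modr ?dvdn_mG ?dvdn_mull.
by exists (x %/ 2 ^ s); rewrite divnK // modn_small.
Qed.

Lemma gen_multG s : s <= n - 1 -> gen n (fun x => x = 2 ^ s \/ x = m) = multG n s.
Proof.
move=> s_le; have m_gt0 := mG_gt0; apply: gen_eq.
- exact: multG_subgyrogroup.
- have sm : 2 ^ s <= m by rewrite mGE leq_exp2l.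
  move=> y [->|->]; rewrite /multG.
    by rewrite dvdn_modr ?dvdn_mG // dvdnn andbT; lia.
  by rewrite modnn dvdn0 andbT; lia.
- by move=> K K_sg KX; apply: multG_min => //; apply: KX; [left | right].
Qed.

Lemma gen_shiftG s : s <= n - 2 -> gen n (fun x => x = m + 2 ^ s) = shiftG n s.
Proof.
move=> s_le; have sm := ltn_mG s_le; apply: gen_eq.
- exact: shiftG_subgyrogroup.
- move=> y ->; rewrite /shiftG /inH leq_addr modnDl modn_small //= mul1n.
  by rewrite addnn -mul2n -expnS dvdnn andbT; lia.
- by move=> K K_sg KX; apply: shiftG_min => //; apply: KX.
Qed.

Lemma subgyrogroup_lower_dvdn (K : nat -> Prop) : is_subgyrogroup n K ->
  exists2 s, s <= n - 1 & forall x, x < m -> K x <-> 2 ^ s %| x.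
Proof.
move=> K_sg; have [_ K0 KD] := subgyrogroup_closed K_sg.
have [d dm K_P] : exists2 d, d %| m & forall x, x < m -> K x <-> d %| x.
  apply: addmod_closed_dvdn => [||x y xm ym Kx Ky]; rewrite ?mG_gt0 //.
  by rewrite -oplus_small //; apply: KD.
have [s s_le d_E] : exists2 s, s <= n - 1 & d = 2 ^ s.
  by apply/(dvdn_pfactor _ _ (isT : prime 2)); rewrite -mGE.
by exists s; rewrite // -d_E.
Qed.

Section UpperHalf.
Variable K : nat -> Prop.
Hypothesis K_sg : is_subgyrogroup n K.
Variable s : nat.
Hypothesis s_le : s <= n - 1.
Hypothesis K_P : forall x, x < m -> K x <-> 2 ^ s %| x.
Variable y : nat.
Hypotheses (K_y : K y) (y_H : m <= y).
Local Notation q := (y %% m).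

Lemma mem_upper_of_dvdn p : p < m -> 2 ^ s %| p + m - q -> K (m + p).
Proof.
move=> pm dp; have [_ _ KD] := subgyrogroup_closed K_sg.
have <- : oplus n ((p + m - q) %% m) y = m + p.
  have qm := ltn_modm y.
  rewrite oplusE /twist /EH inH_small ?ltn_modm // /inH y_H /= mul1n addn0.
  rewrite -(modnDmr _ y) modnDml (_ : p + m - q + q = m + p); last lia.
  by rewrite modnDl modn_small.
by apply: KD => //; apply/K_P; rewrite ?ltn_modm ?dvdn_modr ?dvdn_mG.
Qed.

Lemma dvdn_of_mem_upper x : 0 < s -> K x -> m <= x -> 2 ^ s %| q + x %% m.
Proof.
move=> s_gt0 Kx x_H; have [_ _ KD] := subgyrogroup_closed K_sg.
have sum_P : oplus n y x < m.
  have : inH n (oplus n y x) = false by rewrite inH_oplus /inH y_H x_H.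
  by rewrite /inH; lia.
have := (K_P sum_P).1 (KD _ _ K_y Kx).
rewrite -(modn_small sum_P) modn_oplus dvdn_modr ?dvdn_mG // => d_sum.
have twist0 : twist n y x = false.
  have : 2 %| y + x + twist n y x * k.
    by apply: dvdn_trans d_sum; rewrite -{1}(expn1 2) dvdn_exp2l.
  rewrite /twist /EH dvdn2 !oddD oddM odd_halfm andbF addbF.
  by case: (odd y); case: (odd x); rewrite ?andbF.
move: d_sum; rewrite twist0 mul0n addn0 -(dvdn_modr _ (dvdn_mG s_le)).
by rewrite -modnDm dvdn_modr ?dvdn_mG.
Qed.

Lemma same_set_multG : 2 ^ s %| q -> same_set K (multG n s).
Proof.
move=> dq; have [K_lt _ _] := subgyrogroup_closed K_sg.
move=> x; split=> [Kx|/andP [x_lt dx]].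
  rewrite /multG K_lt //=; case: (ltnP x m) => [xm|x_H].
    by rewrite modn_small //; apply/K_P.
  case: (posnP s) => [->|s_gt0]; first by rewrite dvd1n.
  by have := dvdn_of_mem_upper s_gt0 Kx x_H; rewrite dvdn_addr.
case: (ltnP x m) => [xm|x_H]; first by apply/K_P; rewrite // -(modn_small xm).
rewrite (G2_decomp x_lt) /inH x_H mul1n.
by apply: mem_upper_of_dvdn; rewrite ?ltn_modm // dvdn_sub ?dvdn_add ?dvdn_mG.
Qed.

Lemma same_set_shiftG s' :
  s = s'.+1 -> ~~ (2 ^ s %| q) -> same_set K (shiftG n s').
Proof.
move=> s_E ndq; have [K_lt _ _] := subgyrogroup_closed K_sg.
have dm : 2 ^ s'.+1 %| m by rewrite -s_E dvdn_mG.
have dvd_upper x : K x -> m <= x -> 2 ^ s'.+1 %| q + x %% m.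
  by rewrite -s_E; apply: dvdn_of_mem_upper; rewrite s_E.
have dq : 2 ^ s' %| q.
  by move: (dvd_upper y K_y y_H); rewrite addnn -muln2 expnSr dvdn_pmul2r.
have dq1 : 2 ^ s'.+1 %| q + 2 ^ s'.
  move: ndq; rewrite s_E -(divnK dq) -mulSnr !expnS !dvdn_pmul2r ?expn_gt0 //.
  by rewrite !dvdn2 oddS negbK.
move=> x; split=> [Kx|/andP [x_lt dx]].
  rewrite /shiftG K_lt //=; case: (ltnP x m) => [xm|x_H].
    by rewrite inH_small // mul0n addn0 modn_small // -s_E; apply/K_P.
  rewrite /inH x_H mul1n -(dvdn_addr _ dq1).
  have := dvdn_add (dvd_upper x Kx x_H) (dvdnn (2 ^ s'.+1)).
  by rewrite (_ : q + x %% m + _ = q + 2 ^ s' + (x %% m + 2 ^ s')) // expnS; lia.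
case: (ltnP x m) => [xm|x_H].
  by apply/K_P; move: dx; rewrite // inH_small // mul0n addn0 modn_small // s_E.
move: dx; rewrite /inH x_H mul1n => dx.
rewrite (G2_decomp x_lt) /inH x_H mul1n.
apply: mem_upper_of_dvdn; first exact: ltn_modm.
by rewrite s_E -(subnDr (2 ^ s')) addnAC dvdn_sub // dvdn_add.
Qed.

End UpperHalf.

Lemma subgyrogroup_classify (K : nat -> Prop) : is_subgyrogroup n K ->
  [\/ exists2 s, s <= n - 1 & same_set K (multP n s),
      exists2 s, s <= n - 1 & same_set K (multG n s)
    | exists2 s, s <= n - 2 & same_set K (shiftG n s)].
Proof.
move=> K_sg; have [K_lt _ _] := subgyrogroup_closed K_sg.
have [s s_le K_P] := subgyrogroup_lower_dvdn K_sg.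
have [[y [K_y y_H]]|noH] := asboolP (exists y, K y /\ m <= y).
  have [dq|ndq] := boolP (2 ^ s %| y %% m).
    by apply: Or32; exists s => //; exact: (same_set_multG K_sg s_le K_P K_y y_H).
  case: s s_le K_P ndq => [|s'] s_le K_P ndq; first by rewrite dvd1n in ndq.
  apply: Or33; exists s'; first lia.
  exact: (same_set_shiftG K_sg s_le K_P K_y y_H).
apply: Or31; exists s => // x; rewrite multPE /multG.
split=> [Kx|/andP [/andP [x_lt dx] xP]].
  have xm : x < m by rewrite ltnNge; apply/negP => x_H; apply: noH; exists x.
  by rewrite K_lt // modn_small // inH_small // andbT; apply/K_P.
have xm : x < m by rewrite ltnNge.
by apply/K_P; rewrite // -(modn_small xm).
Qed.

Lemma multG_subgroup_iff s : s <= n - 1 -> is_subgroup n (multG n s) <-> 0 < s.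
Proof.
move=> s_le; have m_gt0 := mG_gt0.
split=> [[_ [_ gyr_id]]|s_gt0].
  case: (posnP s) => // s0.
  have G1 : multG n s 1 by rewrite /multG s0 dvd1n andbT; lia.
  have Gm : multG n s m by rewrite /multG modnn dvdn0 andbT; lia.
  have k_gt0 : 0 < k by rewrite halfmE expn_gt0.
  by have := gyr_id _ _ _ G1 Gm G1; rewrite gyr_1_mG; lia.
apply: subgroup_of; first exact: multG_subgyrogroup.
by move=> a b c _ _ /andP [_ dc]; rewrite gyr_even // (odd_dvdn_modm s_gt0 dc).
Qed.

Lemma shiftG_subgroup s : s <= n - 2 -> is_subgroup n (shiftG n s).
Proof.
move=> s_le; apply: subgroup_of => [|a b c Sa Sb Sc].
  exact: shiftG_subgyrogroup.
case: (posnP s) => [s0|s_gt0].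
  rewrite /gyr inME (odd_shiftG Sa) (odd_shiftG Sb) s0 /=.
  by case: (inH n a); case: (inH n b).
by rewrite gyr_even // (odd_shiftG Sc) gtn_eqF.
Qed.

End G2.

Unset Implicit Arguments.

Theorem mainTheorem4 (n : nat) (hn : 3 <= n) :
  (forall H : nat -> Prop, subG n H ->
    (is_subgyrogroup n H <->
      [\/ exists2 s, s <= n - 1 & same_set H (cycP n s),
          exists2 s, s <= n - 1 &
            same_set H (gen n (fun x => x = 2 ^ s \/ x = mG n))
        | exists2 s, s <= n - 2 &
            same_set H (gen n (fun x => x = mG n + 2 ^ s))])) /\
  (forall s, s <= n - 1 ->
     (is_subgroup n (gen n (fun x => x = 2 ^ s \/ x = mG n)) <-> 0 < s)) /\
  same_set (gen n (fun x => x = 1 \/ x = mG n)) (fun x => x < 2 ^ n) /\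
  (forall s, s <= n - 2 -> is_subgroup n (gen n (fun x => x = mG n + 2 ^ s))).
Proof.
split.
  move=> H _; split=> [H_sg|].
    case: (subgyrogroup_classify hn H_sg) => -[s s_le H_E].
    - by apply: Or31; exists s; rewrite ?cycP_multP.
    - by apply: Or32; exists s; rewrite ?gen_multG.
    - by apply: Or33; exists s; rewrite ?gen_shiftG.
  case=> -[s s_le /same_set_eq ->].
  - by rewrite cycP_multP //; apply: multP_subgyrogroup.
  - by rewrite gen_multG //; apply: multG_subgyrogroup.
  - by rewrite gen_shiftG //; apply: shiftG_subgyrogroup.
split; first by move=> s s_le; rewrite gen_multG //; apply: multG_subgroup_iff.
split; last by move=> s s_le; rewrite gen_shiftG //; apply: shiftG_subgroup.
have := gen_multG hn (leq0n (n - 1)); rewrite expn0 => -> x.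
by rewrite /multG dvd1n andbT expn_mG.
Qed.
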